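(* Let $k\ge1$ be an integer and let $\mathbf{x}\in A^{\mathbb{N}}$ be a sequence such that its length-$k$ sliding-block code $B_k(\mathbf{x})$ is automatic in some regular numeration system $\mathcal{N}_k$. If the Parikh vectors of the length-$n$ prefixes of $B_k(\mathbf{x})$ form an $\mathcal{N}_k$-synchronized sequence, then $(\rho^k_{\mathbf{x}}(n))_{n\ge0}$ is $\mathcal{N}_k$-regular.
   Context: $u\sim_k v$ if $|u|_w=|v|_w$ for all words $w$ of length at most $k$; $\rho^k_{\mathbf{x}}(n)$ is the number of $\sim_k$-classes of length-$n$ factors of $\mathbf{x}$. $B_k(\mathbf{x})$: the sequence whose $i$-th letter codes (injectively) the factor $x_i\cdots x_{i+k-1}$ of $\mathbf{x}=x_0x_1\cdots$, over an alphabet in bijection with the length-$k$ factors of $\mathbf{x}$. An abstract numeration system with zeros $\mathcal{N}=(L,D,<,0)$: $D$ finite totally ordered with least digit $0$, $L\subseteq D^*$ infinite, containing the empty word, $w\in L\Leftrightarrow 0w\in L$; $\mathrm{rep}(n)$ is the $n$-th word of $L\setminus0^+L$ in radix order; $\mathrm{val}$ gives $n$ to all words of $0^*\mathrm{rep}(n)$. It is regular if $L$ and the addition relation $\{\langle x,y,z\rangle:\mathrm{val}(x)+\mathrm{val}(y)=\mathrm{val}(z)\}$ (words read synchronously, same length) are regular languages. A sequence is automatic if a DFA with output outputs its $n$-th term on valid representations of $n$. $s\colon\mathbb{N}\to\mathbb{N}^m$ is synchronized if $\{\langle x,y_1,\dots,y_m\rangle: s(\mathrm{val}(x))=(\mathrm{val}(y_1),\dots,\mathrm{val}(y_m))\}$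 is regular. A sequence $f$ is regular if $f(n)=\lambda\mu(\mathrm{rep}(n))\gamma$ for a row vector $\lambda$, column vector $\gamma$ and matrix-valued morphism $\mu$. *)

From HB Require Import structures.
From mathcomp Require Import all_boot all_order all_algebra.
From mathcomp Require Import boolp.
Set Implicit Arguments.
Unset Strict Implicit.
Unset Printing Implicit Defensive.
Import GRing.Theory.
Local Open Scope ring_scope.

Definition occ (A : eqType) (u w : seq A) : nat :=
  (\sum_(i < (size u).+1) (take (size w) (drop i u) == w))%N.

Definition kab_eq (A : finType) (k : nat) (u v : seq A) : bool :=
  [forall m : 'I_k.+1, forall w : m.-tuple A, occ u w == occ v w].

Definition fact_at (A : finType) (x : nat -> A) (n i : nat) : n.-tuple A :=
  [tuple x (i + j)%N | j < n].

Definition is_factor (A : finType) (x : nat -> A) (n : nat) (u : n.-tuple A)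
  : bool := `[< exists i, u = fact_at x n i >].

Definition factors (A : finType) (x : nat -> A) (n : nat) : {set n.-tuple A} :=
  [set u | is_factor x u].

Definition rho (A : finType) (k : nat) (x : nat -> A) (n : nat) : nat :=
  #|[set [set v in factors x n | kab_eq k u v] | u : n.-tuple A in factors x n]|.

Definition factor_alph (A : finType) (x : nat -> A) (k : nat) : finType :=
  {u : k.-tuple A | is_factor x u}.

Lemma fact_at_is_factor (A : finType) (x : nat -> A) (k i : nat) :
  is_factor x (fact_at x k i).
Proof. by apply: asboolT; exists i. Qed.

Definition Bk (A : finType) (k : nat) (x : nat -> A) (i : nat)
  : factor_alph x k :=
  exist _ (fact_at x k i) (fact_at_is_factor x k i).

Definition parikh_prefix (S : finType) (y : nat -> S) (n : nat)
  : {ffun S -> nat} :=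
  [ffun a => (\sum_(i < n) (y i == a))%N].

Record DFAO (S : finType) (O : Type) := {
  dstate : finType;
  dstart : dstate;
  dtrans : dstate -> S -> dstate;
  dout : dstate -> O }.

Definition dfao_run (S : finType) (O : Type) (M : DFAO S O) (w : seq S) : O :=
  @dout S O M (foldl (@dtrans S O M) (@dstart S O M) w).

Definition regular_lang (S : finType) (L : seq S -> Prop) : Prop :=
  exists M : DFAO S bool, forall w, L w <-> dfao_run M w.

Record ANS := { ans_d : nat; ans_L : pred (seq 'I_ans_d.+1) }.
Arguments ans_L : clear implicits.

Definition digit (N : ANS) : finType := 'I_(ans_d N).+1.

Definition ans_wf (N : ANS) : Prop :=
  [/\ ans_L N [::],
      (forall w, ans_L N (ord0 :: w) = ans_L N w) &
      ~ (exists s : seq (seq (digit N)), forall w, ans_L N w -> w \in s)].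

Definition canonical (N : ANS) (w : seq (digit N)) : bool :=
  ans_L N w && (if w is d :: _ then d != ord0 else true).
Arguments canonical : clear implicits.

Fixpoint lexlt (n : nat) (u v : seq 'I_n) : bool :=
  match u, v with
  | a :: u', b :: v' => (a < b)%N || ((a == b) && lexlt u' v')
  | _, _ => false
  end.

Definition radix_lt (n : nat) (u v : seq 'I_n) : bool :=
  (size u < size v)%N || ((size u == size v) && lexlt u v).

Definition strip0 (N : ANS) (w : seq (digit N)) : seq (digit N) :=
  drop (find (fun d : digit N => d != ord0) w) w.

(* val(w) for w in 0^* rep(n) is n, the index (from 0) of strip0 w among
   the canonical words in radix order *)
Definition val (N : ANS) (w : seq (digit N)) : nat :=
  (\sum_(m < (size (strip0 w)).+1)
     #|[pred t : m.-tuple (digit N) | canonical N t && radix_lt t (strip0 w)]|)%N.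

Definition add_lang (N : ANS) (w : seq ((digit N * digit N) * digit N)) : Prop :=
  let x := map (fun p => p.1.1) w in
  let y := map (fun p => p.1.2) w in
  let z := map (fun p => p.2) w in
  [/\ ans_L N x, ans_L N y, ans_L N z & (val x + val y = val z)%N].

Definition regular_ANS (N : ANS) : Prop :=
  ans_wf N /\ regular_lang (fun w : seq (digit N) => ans_L N w)
           /\ regular_lang (@add_lang N).

Definition automatic (N : ANS) (O : Type) (y : nat -> O) : Prop :=
  exists M : DFAO (digit N) O,
    forall w, ans_L N w -> dfao_run M w = y (val w).

Definition sync_lang (N : ANS) (I : finType) (s : nat -> {ffun I -> nat})
  (w : seq (digit N * {ffun I -> digit N})) : Prop :=
  let x := map fst w in
  let y := fun i : I => map (fun p : digit N * {ffun I -> digit N} => p.2 i) w in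
  [/\ ans_L N x, (forall i, ans_L N (y i)) &
      (forall i, s (val x) i = val (y i))].

Definition synchronized (N : ANS) (I : finType) (s : nat -> {ffun I -> nat})
  : Prop := regular_lang (@sync_lang N I s).

Definition mx_morph (D : Type) (r : nat) (mu : D -> 'M[int]_r) (w : seq D)
  : 'M[int]_r := foldl (fun M d => M *m mu d) 1%:M w.

Definition regular_seq (N : ANS) (f : nat -> nat) : Prop :=
  exists (r : nat) (lam : 'rV[int]_r) (mu : digit N -> 'M[int]_r)
         (gam : 'cV[int]_r),
    forall w, canonical N w ->
      (f (val w))%:Z = (lam *m mx_morph mu w *m gam) ord0 ord0.

(* Two factors of x of length n are k-abelian equivalent iff they
   have the same prefix of length k - 1 and the same number of occurrences of
   each length-k factor.  For the factor starting at i, the prefix is read off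
   the letter B_k(x)_i, and the occurrence counts form the vector
   P(i + n - k + 1) - P(i), where P(j) is the Parikh vector of the length-j
   prefix of B_k(x).  So the classes of length n correspond to the pairs
   (a, V) such that some i has prefix a and counts V.  This relation between
   n, a and V is first-order definable from addition, the automatic sequence
   B_k(x) and the synchronized map P, hence recognized by an automaton reading
   n and the entries of V in parallel.  The entries of V are at most n, so
   they have representations of the length of rep(n), and counting classes
   becomes counting the accepting runs of an automaton with one input track
   fixed to rep(n), which a linear representation does.  When canonical words
   have bounded length, every sequence is regular. *)

From mathcomp Require Import all_boot all_order all_algebra.
From mathcomp Require Import boolp zify.
From Pilot Require Import Defs.
Set Implicit Arguments.
Unset Strict Implicit.
Unset Printing Implicit Defensive.

Section RadixOrder.
Variable n : nat.
Implicit Types u v w : seq 'I_n.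

Lemma lexlt_irr u : lexlt u u = false.
Proof. by elim: u => //= a u ->; rewrite ltnn eqxx. Qed.

Lemma lexlt_trans u v w : lexlt u v -> lexlt v w -> lexlt u w.
Proof.
elim: u v w => [|a u IH] [|b v] [|c w] //=.
move=> /orP[ab | /andP[/eqP ab uv]] /orP[bc | /andP[/eqP bc vw]]; apply/orP.
- by left; apply: ltn_trans ab bc.
- by left; rewrite -bc.
- by left; rewrite ab.
- by right; rewrite ab bc eqxx (IH _ _ uv vw).
Qed.

Lemma lexlt_total u v : size u = size v -> u != v -> lexlt u v || lexlt v u.
Proof.
elim: u v => [|a u IH] [|b v] //= [] Hs Hne.
case: (ltngtP a b) => [ab|ba|ab]; rewrite ?ab ?ba ?orbT //.
have eab : a = b by apply: val_inj.
subst b; rewrite eqxx /=; apply: IH => //.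
by apply: contra Hne => /eqP ->.
Qed.

Lemma radix_lt_irr u : radix_lt u u = false.
Proof. by rewrite /radix_lt ltnn eqxx lexlt_irr. Qed.

Lemma radix_lt_size u v : radix_lt u v -> size u <= size v.
Proof. by rewrite /radix_lt => /orP[/ltnW|/andP[/eqP-> _]]. Qed.

Lemma radix_lt_trans u v w : radix_lt u v -> radix_lt v w -> radix_lt u w.
Proof.
rewrite /radix_lt => /orP[uv | /andP[/eqP uv luv]] /orP[vw | /andP[/eqP vw lvw]].
- by rewrite (ltn_trans uv vw).
- by rewrite -vw uv.
- by rewrite uv vw.
- by rewrite uv vw eqxx (lexlt_trans luv lvw) orbT.
Qed.

Lemma radix_lt_total u v : u != v -> radix_lt u v || radix_lt v u.
Proof.
move=> Hne; rewrite /radix_lt.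
by case: (ltngtP (size u) (size v)) => [//|//|Hs] /=; apply: lexlt_total.
Qed.

End RadixOrder.

Section WordLists.
Variable T : finType.

Fixpoint words_of_size m : seq (seq T) :=
  if m is m'.+1 then [seq d :: U | d <- enum T, U <- words_of_size m'] else [:: [::]].

Lemma mem_words_of_size m t : (t \in words_of_size m) = (size t == m).
Proof.
elim: m t => [|m IH] [|d t] //=; first by apply/allpairsP => -[[? ?] [_ _ /=]].
rewrite eqSS -IH; apply/allpairsP/idP => [[[d' t'] [_ H /= [_ ->]]] //|H].
by exists (d, t); rewrite mem_enum.
Qed.

Lemma uniq_words_of_size m : uniq (words_of_size m).
Proof.
elim: m => //= m IH; apply: allpairs_uniq => //; first exact: enum_uniq.
by move=> [d t] [d' t'] _ _ /= [-> ->].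
Qed.

(* [val] is the numeration value of Defs, shadowing the subtype projection. *)
Lemma card_tuple_pred m (Q : pred (seq T)) :
  #|[pred t : m.-tuple T | Q t]| = count Q (words_of_size m).
Proof.
rewrite cardE /enum_mem size_filter -(count_map (fun t : m.-tuple T => tval t)) -enumT.
set s := map (fun t : m.-tuple T => tval t) _.
suff /permP : perm_eq s (words_of_size m) by [].
apply: uniq_perm.
- by rewrite map_inj_uniq ?enum_uniq //; apply: val_inj.
- exact: uniq_words_of_size.
move=> t; rewrite mem_words_of_size; apply/mapP/eqP => [[u _ ->]|Ht].
  by rewrite size_tuple.
by exists (Tuple (introT eqP Ht)); rewrite ?mem_enum.
Qed.

Definition words_upto B := flatten (map words_of_size (iota 0 B.+1)).

Lemma mem_words_upto B t : (t \in words_upto B) = (size t <= B).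
Proof.
apply/flatten_mapP/idP => [[m]|Ht].
  by rewrite mem_iota mem_words_of_size => /andP[_ Hm] /eqP ->.
by exists (size t); rewrite ?mem_iota ?mem_words_of_size.
Qed.

Lemma uniq_words_upto B : uniq (words_upto B).
Proof.
rewrite /words_upto; elim: (iota 0 B.+1) (iota_uniq 0 B.+1) => //= m s IH /andP[ms Us].
rewrite cat_uniq uniq_words_of_size IH // andbT.
apply/hasPn => t /flatten_mapP [m' m's]; rewrite !mem_words_of_size => /eqP->.
by apply: contra ms => /eqP<-.
Qed.

End WordLists.

Definition digit0 (N : ANS) : digit N := ord0.

Section Numeration.
Variable N : ANS.
Local Notation D := (digit N).
Local Notation L := (ans_L N).
Local Notation d0 := (digit0 N).
Hypothesis L_cons0 : forall w, L (ord0 :: w) = L w.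
Implicit Types (w : seq D) (c : seq D).

Lemma L_nseq0 z w : L (nseq z d0 ++ w) = L w.
Proof. by elim: z => //= z IH; rewrite L_cons0. Qed.

Lemma strip0_nseq0 z w : strip0 (nseq z d0 ++ w) = strip0 w.
Proof. by elim: z. Qed.

Lemma val_nseq0 z w : val (nseq z d0 ++ w) = val w.
Proof. by rewrite /val strip0_nseq0. Qed.

Definition nlead0 w := find (fun d : D => d != ord0) w.

Lemma nlead0_strip0 w : w = nseq (nlead0 w) d0 ++ strip0 w.
Proof.
elim: w => //= d w IH; rewrite /nlead0 /strip0 /=.
by case: eqP => [->|] //=; rewrite {1}IH.
Qed.

Lemma L_strip0 w : L (strip0 w) = L w.
Proof. by rewrite {2}(nlead0_strip0 w) L_nseq0. Qed.

Lemma strip0_cons w d s : strip0 w = d :: s -> d != ord0.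
Proof.
move=> E; have Hlt : nlead0 w < size w.
  by rewrite ltnNge; apply/negP => H; move: E; rewrite /strip0 drop_oversize.
have := nth_find ord0 (etrans (has_find _ _) Hlt).
by rewrite -[find _ w]addn0 -nth_drop -/(strip0 w) E.
Qed.

Lemma canonical_strip0 w : L w -> canonical N (strip0 w).
Proof.
move=> Lw; rewrite /canonical L_strip0 Lw /=.
by case E: (strip0 w) => [|d s] //; apply: strip0_cons E.
Qed.

Lemma strip0_canonical c : canonical N c -> strip0 c = c.
Proof. by case: c => [|d c] //= /andP[_ Hd]; rewrite /strip0 /= Hd. Qed.

Lemma strip0_idem w : strip0 (strip0 w) = strip0 w.
Proof.
case E: (strip0 w) => [|d s] //.
by rewrite /strip0 /= (strip0_cons E).
Qed.

Lemma val_strip0 w : val (strip0 w) = val w.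
Proof. by rewrite /val strip0_idem. Qed.

Lemma size_strip0 w : size (strip0 w) <= size w.
Proof. by rewrite /strip0 size_drop leq_subr. Qed.

Definition radix_below c := fun t => canonical N t && radix_lt t c.

Lemma val_countE w B : size (strip0 w) <= B ->
  val w = count (radix_below (strip0 w)) (words_upto D B).
Proof.
move=> HB; rewrite /val; set s := strip0 w.
rewrite (eq_bigr (fun m : 'I_(size s).+1 => count (radix_below s) (words_of_size D m)));
  last by move=> m _; rewrite -card_tuple_pred.
rewrite /words_upto count_flatten sumnE big_map -/(index_iota 0 B.+1) big_map.
rewrite -(big_mkord xpredT (fun i => count (radix_below s) (words_of_size D i))).
rewrite (@big_cat_nat _ _ _ (size s).+1 0 B.+1) //=.
rewrite [X in _ = _ + X]big1_seq ?addn0 // => m.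
rewrite mem_index_iota => /andP[_ /andP[Hm _]].
apply/eqP; rewrite -leqn0 leqNgt -has_count; apply/hasPn => t.
rewrite mem_words_of_size => /eqP Ht; apply/negP => /andP[_ /radix_lt_size].
by rewrite Ht leqNgt Hm.
Qed.

Lemma val_canonicalE c B : canonical N c -> size c <= B ->
  val c = count (radix_below c) (words_upto D B).
Proof. by move=> Hc HB; rewrite (@val_countE _ B) strip0_canonical. Qed.

Lemma radix_lt_val c1 c2 : canonical N c1 -> canonical N c2 -> radix_lt c1 c2 ->
  val c1 < val c2.
Proof.
move=> H1 H2 H12; have Hs := radix_lt_size H12.
rewrite (val_canonicalE H1 Hs) (val_canonicalE H2 (leqnn _)).
have HI : count (predI (radix_below c1) (pred1 c1)) (words_upto D (size c2)) = 0.
  apply/eqP; rewrite -leqn0 leqNgt -has_count; apply/hasPn => t _ /=.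
  by apply/negP => /andP[/andP[_ Ht] /eqP Htc]; rewrite Htc radix_lt_irr in Ht.
have := count_predUI (radix_below c1) (pred1 c1) (words_upto D (size c2)).
rewrite HI addn0 count_uniq_mem ?uniq_words_upto // mem_words_upto Hs addn1 => <-.
apply: sub_count => t /= /orP[/andP[Ht Hlt]|/eqP->]; rewrite /radix_below ?H1 ?Ht //=.
exact: radix_lt_trans Hlt H12.
Qed.

Lemma val_inj_canonical c1 c2 :
  canonical N c1 -> canonical N c2 -> val c1 = val c2 -> c1 = c2.
Proof.
move=> H1 H2 Hv; apply/eqP; apply/negPn/negP => /radix_lt_total/orP[] /radix_lt_val.
  by move/(_ H1 H2); rewrite Hv ltnn.
by move/(_ H2 H1); rewrite Hv ltnn.
Qed.

Lemma leq_size_val c1 c2 : canonical N c1 -> canonical N c2 -> val c1 <= val c2 ->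
  size c1 <= size c2.
Proof.
move=> H1 H2 Hv; rewrite leqNgt; apply/negP => Hs.
have Hlt : radix_lt c2 c1 by rewrite /radix_lt Hs.
by have := radix_lt_val H2 H1 Hlt; rewrite ltnNge Hv.
Qed.

(* The canonical words radix-below c have pairwise distinct values, all less
   than val c, and there are val c of them: so they take every such value. *)
Lemma canonical_lt_val c j : canonical N c -> j < val c ->
  exists2 c', canonical N c' & val c' = j.
Proof.
move=> Hc Hj; set s := filter (radix_below c) (words_upto D (size c)).
have Hin t : t \in s -> canonical N t /\ radix_lt t c.
  by rewrite mem_filter => /andP[/andP[]].
have Us : uniq (map (@val N) s).
  rewrite map_inj_in_uniq ?filter_uniq ?uniq_words_upto // => t1 t2 /Hin[C1 _] /Hin[C2 _].
  exact: val_inj_canonical.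
have Hsub : {subset map (@val N) s <= iota 0 (val c)}.
  by move=> m /mapP[t /Hin[Ct Lt] ->]; rewrite mem_iota /= add0n radix_lt_val.
have Hle : size (iota 0 (val c)) <= size (map (@val N) s).
  by rewrite size_iota size_map size_filter -val_canonicalE.
have [_ Heq] := uniq_min_size Us Hsub Hle.
have : j \in map (@val N) s by rewrite Heq mem_iota.
by case/mapP => t /Hin[Ct _] ->; exists t.
Qed.

Lemma val_inj_size w1 w2 :
  L w1 -> L w2 -> size w1 = size w2 -> val w1 = val w2 -> w1 = w2.
Proof.
move=> H1 H2 Hs Hv.
have Hc : strip0 w1 = strip0 w2.
  by apply: val_inj_canonical; rewrite ?canonical_strip0 // !val_strip0.
have Hz : nlead0 w1 = nlead0 w2.
  move: Hs; rewrite {1}(nlead0_strip0 w1) {1}(nlead0_strip0 w2) !size_cat !size_nseq Hc.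
  by move/addIn.
by rewrite (nlead0_strip0 w1) (nlead0_strip0 w2) Hc Hz.
Qed.

Lemma leq_val_same_size w j : L w -> j <= val w ->
  exists w', [/\ L w', size w' = size w & val w' = j].
Proof.
move=> Lw; rewrite leq_eqVlt => /orP[/eqP->|Hj]; first by exists w.
rewrite -val_strip0 in Hj.
have [c Cc Hcj] := canonical_lt_val (canonical_strip0 Lw) Hj.
have Hsz : size c <= size w.
  apply: leq_trans (size_strip0 w); apply: leq_size_val (canonical_strip0 Lw) _ => //.
  by rewrite Hcj ltnW.
exists (nseq (size w - size c) d0 ++ c); split.
- by rewrite L_nseq0; case/andP: Cc.
- by rewrite size_cat size_nseq subnK.
- by rewrite val_nseq0.
Qed.

Lemma val_nil : val ([::] : seq D) = 0.
Proof.
rewrite (@val_countE _ 0) //; apply/eqP; rewrite -leqn0 leqNgt -has_count.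
by apply/hasPn => -[|? ?] _; rewrite /radix_below /radix_lt ltn0 ?andbF.
Qed.

Lemma val_canonical_surj : L [::] ->
    (forall B, exists2 c, canonical N c & B < size c) ->
  forall j, exists2 c, canonical N c & val c = j.
Proof.
move=> Lnil unbounded; elim=> [|j [c Cc Vc]].
  by exists [::]; rewrite ?val_nil /canonical ?Lnil.
have [c2 C2 S2] := unbounded (size c).
have Hlt : radix_lt c c2 by rewrite /radix_lt S2.
have := radix_lt_val Cc C2 Hlt.
rewrite Vc leq_eqVlt => /orP[/eqP Hj|Hj]; first by exists c2.
exact: canonical_lt_val C2 Hj.
Qed.

End Numeration.

Section Automata.
Variable S : finType.

Definition dfa_pair (O1 O2 : Type) (M1 : DFAO S O1) (M2 : DFAO S O2) :
    DFAO S (O1 * O2) :=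
  @Build_DFAO S _ (dstate M1 * dstate M2)%type (dstart M1, dstart M2)
    (fun p a => (dtrans p.1 a, dtrans p.2 a)) (fun p => (dout p.1, dout p.2)).

Lemma dfao_run_pair (O1 O2 : Type) (M1 : DFAO S O1) (M2 : DFAO S O2) w :
  dfao_run (dfa_pair M1 M2) w = (dfao_run M1 w, dfao_run M2 w).
Proof.
by rewrite /dfao_run /=; elim: w (dstart M1) (dstart M2) => //= a w IH s1 s2.
Qed.

Definition dfa_post (O O' : Type) (f : O -> O') (M : DFAO S O) : DFAO S O' :=
  @Build_DFAO S _ (dstate M) (dstart M) (@dtrans _ _ M) (fun s => f (dout s)).

Lemma dfao_run_post (O O' : Type) (f : O -> O') (M : DFAO S O) w :
  dfao_run (dfa_post f M) w = f (dfao_run M w).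
Proof. by []. Qed.

Definition dfa_pre (S' : finType) (O : Type) (g : S' -> S) (M : DFAO S O) :
    DFAO S' O :=
  @Build_DFAO S' O (dstate M) (dstart M) (fun s a => dtrans s (g a)) (@dout _ _ M).

Lemma dfao_run_pre (S' : finType) (O : Type) (g : S' -> S) (M : DFAO S O) w :
  dfao_run (dfa_pre g M) w = dfao_run M (map g w).
Proof. by rewrite /dfao_run /=; congr dout; elim: w (dstart M) => //= a w IH s. Qed.

Definition dfa_and (M1 M2 : DFAO S bool) : DFAO S bool :=
  dfa_post (fun p => p.1 && p.2) (dfa_pair M1 M2).

Lemma dfao_run_and M1 M2 w :
  dfao_run (dfa_and M1 M2) w = dfao_run M1 w && dfao_run M2 w.
Proof. by rewrite dfao_run_post dfao_run_pair. Qed.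

Definition dfa_or (M1 M2 : DFAO S bool) : DFAO S bool :=
  dfa_post (fun p => p.1 || p.2) (dfa_pair M1 M2).

Lemma dfao_run_or M1 M2 w :
  dfao_run (dfa_or M1 M2) w = dfao_run M1 w || dfao_run M2 w.
Proof. by rewrite dfao_run_post dfao_run_pair. Qed.

Definition track (J : finType) (W : seq {ffun J -> S}) (j : J) : seq S :=
  map (fun f : {ffun J -> S} => f j) W.

Lemma size_track (J : finType) (W : seq {ffun J -> S}) j : size (track W j) = size W.
Proof. exact: size_map. Qed.

Lemma tracks_inj (J : finType) (V W : seq {ffun J -> S}) : size V = size W ->
  (forall j, track V j = track W j) -> V = W.
Proof.
elim: V W => [|v V IH] [|w W] //= [Hs] Ht.
congr cons; last by apply: IH => // j; case: (Ht j).
by apply/ffunP => j; case: (Ht j).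
Qed.

Definition dfa_tracks (O : Type) (J : finType) (M : DFAO S O) :
    DFAO {ffun J -> S} {ffun J -> O} :=
  @Build_DFAO _ _ {ffun J -> dstate M} [ffun => dstart M]
    (fun (f : {ffun J -> dstate M}) (a : {ffun J -> S}) => [ffun j => dtrans (f j) (a j)])
    (fun f => [ffun j => dout (f j)]).

Lemma dfao_run_tracks (O : Type) (J : finType) (M : DFAO S O) W :
  dfao_run (dfa_tracks J M) W = [ffun j => dfao_run M (track W j)].
Proof.
rewrite /dfao_run /=.
suff -> : forall f, foldl (@dtrans _ _ (dfa_tracks J M)) f W =
    [ffun j => foldl (@dtrans _ _ M) (f j) (track W j)].
  by apply/ffunP => j; rewrite !ffunE.
elim: W => [|a W IH] f /=; first by apply/ffunP => j; rewrite ffunE.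
by rewrite IH; apply/ffunP => j; rewrite !ffunE.
Qed.

(* Existential projection by the subset construction; a leading padding of
   the input by p0 is absorbed into the start set. *)
Section Projection.
Variables (P : finType) (pr : S -> P) (p0 : P) (M : DFAO S bool).

Definition proj_step (X : {set dstate M}) (a : P) : {set dstate M} :=
  [set s' | [exists s in X, exists t, (pr t == a) && (s' == dtrans s t)]].

Definition proj_start : {set dstate M} :=
  [set s | `[< exists U, map pr U = nseq (size U) p0 /\
                         s = foldl (@dtrans _ _ M) (dstart M) U >]].

Definition dfa_proj : DFAO P bool :=
  @Build_DFAO P bool {set dstate M} proj_start proj_step
    (fun X => [exists s in X, dout s]).

Lemma mem_foldl_proj_step W X s' : s' \in foldl proj_step X W <->
  exists2 s, s \in X & exists2 V, map pr V = W & s' = foldl (@dtrans _ _ M) s V.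
Proof.
elim: W X => [|a W IH] X /=.
  split=> [Hs|[s Hs [[|? ?] // _ ->]]] //.
  by exists s' => //; exists [::].
rewrite IH; split.
  move=> [s1 + [V HV ->]]; rewrite inE => /existsP[s /andP[Hs /existsP[t /andP[/eqP Ht /eqP->]]]].
  by exists s => //; exists (t :: V); rewrite //= Ht HV.
move=> [s Hs [[//|t V] /= [Ht HV] ->]].
exists (dtrans s t); last by exists V.
by rewrite inE; apply/existsP; exists s; rewrite Hs; apply/existsP; exists t; rewrite Ht !eqxx.
Qed.

Lemma dfao_run_proj W : dfao_run dfa_proj W <->
  exists V z, map pr V = nseq z p0 ++ W /\ dfao_run M V.
Proof.
rewrite /dfao_run /=; split.
  move=> /existsP[s /andP[/mem_foldl_proj_step [s0 + [V HV Es]] Ho]].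
  rewrite inE => /asboolP [U [HU Es0]]; rewrite {}Es {}Es0 in Ho.
  exists (U ++ V), (size U); split; first by rewrite map_cat HU HV.
  by rewrite foldl_cat.
move=> [V [z [HV Hrun]]].
have Hsz : z <= size V by rewrite -(size_map pr) HV size_cat size_nseq leq_addr.
apply/existsP; exists (foldl (@dtrans _ _ M) (dstart M) V).
rewrite Hrun andbT; apply/mem_foldl_proj_step.
exists (foldl (@dtrans _ _ M) (dstart M) (take z V)).
  rewrite inE; apply/asboolP; exists (take z V); split=> //.
  by rewrite map_take HV take_size_cat ?size_nseq // size_take_min (minn_idPl Hsz).
exists (drop z V); first by rewrite map_drop HV drop_size_cat // size_nseq.
by rewrite -foldl_cat cat_take_drop.
Qed.

End Projection.

End Automata.

Section AbelianEquivalence.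
Variable A : finType.
Implicit Types u v w : seq A.

Lemma occ_cons_sum u w :
  occ u w = (take (size w) u == w) + \sum_(d : A) occ u (d :: w).
Proof.
rewrite /occ big_ord_recl /= drop0; congr addn.
rewrite exchange_big big_ord_recr /= drop_size [X in _ = _ + X]big1 ?addn0 //.
case: u => [|a0 u]; first by rewrite !big_ord0.
apply: eq_bigr => p _; rewrite [in RHS](drop_nth a0) ?ltn_ord //=.
under eq_bigr => d _ do rewrite eqseq_cons.
rewrite (bigD1 (nth a0 (a0 :: u) p)) //= eqxx big1 ?addn0 // => d /negbTE Hd.
by rewrite eq_sym Hd.
Qed.

Lemma kab_eqP k u v :
  reflect (forall w, size w <= k -> occ u w = occ v w) (kab_eq k u v).
Proof.
apply: (iffP forallP) => [H w Hw|H m].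
  have := forallP (H (Ordinal (Hw : size w < k.+1))) (Tuple (eqxx (size w))).
  by move/eqP.
by apply/forallP => w; apply/eqP/H; rewrite size_tuple -ltnS ltn_ord.
Qed.

Lemma kab_eq_refl k u : kab_eq k u u.
Proof. exact/kab_eqP. Qed.

Lemma kab_eq_trans k u v w : kab_eq k u v -> kab_eq k v w -> kab_eq k u w.
Proof. by move=> /kab_eqP H1 /kab_eqP H2; apply/kab_eqP => t Ht; rewrite H1 ?H2. Qed.

Lemma take_eq_of_occ_eq K u v : size u = size v ->
  (forall w, size w <= K.+1 -> occ u w = occ v w) -> take K u = take K v.
Proof.
move=> Hs H; set w := take K u.
have Hw : size w <= K by rewrite size_take_min geq_minl.
have Hu : take (size w) u = w by rewrite size_take_min take_min take_size.
have Hv : take (size w) v = take K v by rewrite size_take_min Hs take_min take_size.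
have Hsum : \sum_(d : A) occ u (d :: w) = \sum_(d : A) occ v (d :: w).
  by apply: eq_bigr => d _; apply: H; rewrite /= ltnS.
have := occ_cons_sum u w; rewrite H ?(leq_trans Hw) // occ_cons_sum Hu eqxx Hsum.
by move/addIn; case: eqP => // Hwv _; rewrite -Hv Hwv.
Qed.

Lemma occ_eq_of_take_eq K u v : take K u = take K v ->
    (forall w, size w = K.+1 -> occ u w = occ v w) ->
  forall w, size w <= K.+1 -> occ u w = occ v w.
Proof.
move=> Hp Hk w; move Em : (K.+1 - size w) => m.
elim: m w Em => [|m IH] w Em Hw; first by apply: Hk; lia.
rewrite occ_cons_sum [RHS]occ_cons_sum; congr addn.
  have HwK : size w <= K by lia.
  by rewrite -(take_takel _ HwK) Hp take_takel.
by apply: eq_bigr => d _; apply: IH => /=; lia.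
Qed.

Lemma kab_eq_prefix_occ k u v : size u = size v ->
  kab_eq k.+1 u v =
  (take k u == take k v) && `[< forall w, size w = k.+1 -> occ u w = occ v w >].
Proof.
move=> Hs; apply/kab_eqP/andP => [H|[/eqP Hp /asboolP Hk]].
  split; first by apply/eqP/take_eq_of_occ_eq.
  by apply/asboolP => w Hw; apply: H; rewrite Hw.
exact: occ_eq_of_take_eq.
Qed.

End AbelianEquivalence.

Section Factors.
Variables (A : finType) (k : nat) (x : nat -> A).
Hypothesis k_gt0 : 0 < k.
Local Notation S := (factor_alph x k).
Local Notation y := (Bk k x).
Local Notation P := (parikh_prefix (Bk k x)).

Lemma take_drop_fact_at n i p m :
  take m (drop p (fact_at x n i)) = mkseq (fun j => x (i + p + j)) (minn m (n - p)).
Proof.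
have -> : tval (fact_at x n i) = mkseq (fun j => x (i + j)) n.
  by rewrite /= /mkseq -val_enum_ord -map_comp.
rewrite /mkseq -map_drop -map_take drop_iota take_iota add0n.
rewrite -[p in iota p]addn0 iotaDl -map_comp.
by apply: eq_map => j /=; rewrite addnA.
Qed.

Lemma occ_fact_at (w : seq A) n i : size w = k ->
  occ (fact_at x n i) w = \sum_(p < n - k.-1) (tval (fact_at x k (i + p)) == w).
Proof.
move=> Hw; rewrite /occ size_tuple Hw.
rewrite -(big_mkord xpredT (fun p => nat_of_bool (take k (drop p (fact_at x n i)) == w))).
rewrite -(big_mkord xpredT (fun p => nat_of_bool (tval (fact_at x k (i + p)) == w))).
rewrite (@big_cat_nat _ _ _ (n - k.-1) 0 n.+1) //; last by lia.
rewrite [X in _ + X = _]big1_seq ?addn0; last first.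
  move=> p /andP[_]; rewrite mem_index_iota => /andP[Hp _].
  apply/eqP; rewrite eqb0; apply/eqP => /(f_equal size).
  by rewrite take_drop_fact_at size_mkseq Hw; lia.
rewrite !big_seq; apply: eq_bigr => p; rewrite mem_index_iota => /andP[_ Hp].
rewrite -[tval (fact_at x k _)]drop0 -[drop 0 _]take_size size_drop size_tuple subn0.
by rewrite !take_drop_fact_at addn0 subn0 minnn; congr (mkseq _ _ == w); lia.
Qed.

Lemma parikh_prefix_leq i m c : P i c <= P (i + m) c.
Proof.
rewrite !ffunE -!(big_mkord xpredT (fun p => nat_of_bool (y p == c))).
by rewrite (@big_cat_nat _ _ _ i 0 (i + m)) ?leq_addr //= leq_addr.
Qed.

Definition window_parikh n i : {ffun S -> nat} :=
  [ffun c => P (i + (n - k.-1)) c - P i c].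

Lemma window_parikhE n i c :
  window_parikh n i c = \sum_(p < n - k.-1) (y (i + p) == c).
Proof.
rewrite !ffunE -!(big_mkord xpredT (fun p => nat_of_bool (y p == c))).
rewrite -(big_mkord xpredT (fun p => nat_of_bool (y (i + p) == c))).
rewrite (@big_cat_nat _ _ _ i 0 (i + (n - k.-1))) ?leq_addr //= addKn.
by rewrite -{1}[i]add0n big_addn addKn; apply: eq_bigr => p _; rewrite addnC.
Qed.

Lemma window_parikh_le n i c : window_parikh n i c <= n.
Proof.
rewrite window_parikhE; apply: leq_trans (leq_subr k.-1 n).
apply: leq_trans (_ : \sum_(p < n - k.-1) 1 <= _); first by apply: leq_sum => p _; case: eqP.
by rewrite sum_nat_const card_ord muln1.
Qed.

Lemma occ_eq_window n i j :
  `[< forall w, size w = k -> occ (fact_at x n i) w = occ (fact_at x n j) w >] =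
  (window_parikh n i == window_parikh n j).
Proof.
apply/asboolP/eqP => [Hk|Hd w Hw].
  apply/ffunP => c; rewrite !window_parikhE.
  by have := Hk _ (size_tuple (sval c)); rewrite !occ_fact_at ?size_tuple.
rewrite !occ_fact_at //; have Hw' : size w == k by rewrite Hw.
case Hf: (is_factor x (Tuple Hw')).
  pose c : S := exist _ (Tuple Hw') Hf.
  by have := congr1 (fun f : {ffun S -> nat} => f c) Hd; rewrite !window_parikhE.
have Hz t : (tval (fact_at x k t) == w) = false.
  apply/negP => /eqP Heq; move: Hf.
  have -> : Tuple Hw' = fact_at x k t by apply: val_inj; rewrite /= Heq.
  by rewrite fact_at_is_factor.
by rewrite !big1 // => p _; rewrite Hz.
Qed.

Definition prefix_code t (b : seq A) : (k.-1).-tuple (option A) :=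
  [tuple nth None (map Some (take t b)) s | s < k.-1].

Definition factor_prefix n i := prefix_code k.-1 (fact_at x n i).

Lemma factor_prefix_eq n i j :
  (factor_prefix n i == factor_prefix n j) =
  (take k.-1 (fact_at x n i) == take k.-1 (fact_at x n j)).
Proof.
apply/eqP/eqP => [H|H]; last by rewrite /factor_prefix /prefix_code H.
have Hs i' : size (take k.-1 (fact_at x n i')) = minn k.-1 n by rewrite size_take_min size_tuple.
apply: (@inj_map _ _ (@Some A)); first by move=> a b [].
apply: (@eq_from_nth _ None); first by rewrite !size_map !Hs.
move=> p; rewrite size_map Hs => Hp.
have Hpk : p < k.-1 by apply: leq_trans Hp (geq_minl _ _).
by have := congr1 (fun t => tnth t (Ordinal Hpk)) H; rewrite !tnth_mktuple.
Qed.

Lemma kab_eq_fact_at n i j :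
  kab_eq k (fact_at x n i) (fact_at x n j) =
  (factor_prefix n i == factor_prefix n j) && (window_parikh n i == window_parikh n j).
Proof.
rewrite factor_prefix_eq -occ_eq_window.
have := @kab_eq_prefix_occ A k.-1 (fact_at x n i) (fact_at x n j).
by rewrite prednK // !size_tuple; apply.
Qed.

Lemma factor_prefix_letter n i :
  factor_prefix n i = prefix_code (minn k.-1 n) (fact_at x k i).
Proof.
rewrite /factor_prefix /prefix_code; congr mktuple; apply: funext => s.
congr (nth _ (map _ _) _).
rewrite -[fact_at x n i : seq A]drop0 -[fact_at x k i : seq A]drop0 !take_drop_fact_at.
congr mkseq; lia.
Qed.

End Factors.

Section RunCounting.
Local Open Scope ring_scope.
Variables (D E T : finType) (step : T -> D -> E -> T) (out init : T -> nat).

Lemma Posz_sum (I : Type) (r : seq I) (P : pred I) (F : I -> nat) :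
  Posz (\sum_(i <- r | P i) F i)%N = \sum_(i <- r | P i) Posz (F i).
Proof. exact: (big_morph Posz PoszD (erefl _)). Qed.

Lemma mx_morph_cons (r : nat) (mu : D -> 'M[int]_r) d w :
  mx_morph mu (d :: w) = mu d *m mx_morph mu w.
Proof.
have foldlE (M : 'M[int]_r) w' :
  foldl (fun M d => M *m mu d) M w' = M *m mx_morph mu w'.
  rewrite /mx_morph; elim: w' M => [|d' w' IH] M /=; first by rewrite mulmx1.
  by rewrite IH [in RHS]IH mul1mx mulmxA.
by rewrite {1}/mx_morph /= foldlE mul1mx.
Qed.

Fixpoint run2 (t : T) (w : seq D) (U : seq E) : T :=
  match w, U with
  | d :: w', e :: U' => run2 (step t d e) w' U'
  | _, _ => t
  end.

Definition run_count (w : seq D) (t : T) : nat :=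
  \sum_(U <- words_of_size E (size w)) out (run2 t w U).

Definition count_mx (d : D) : 'M[int]_#|T| :=
  \matrix_(i, j) #|[pred e | step (enum_val i) d e == enum_val j]|%:Z.
Definition count_col : 'cV[int]_#|T| := \col_i (out (enum_val i))%:Z.
Definition count_row : 'rV[int]_#|T| := \row_i (init (enum_val i))%:Z.

Lemma count_mx_col w t :
  (mx_morph count_mx w *m count_col) (enum_rank t) 0 = (run_count w t)%:Z.
Proof.
elim: w t => [|d w IH] t.
  by rewrite /mx_morph /= mul1mx mxE enum_rankK /run_count /= big_seq1.
rewrite mx_morph_cons -mulmxA mxE.
under eq_bigr => j _ do rewrite mxE -{2}(enum_valK j) IH -PoszM.
rewrite -Posz_sum; congr Posz.
rewrite /run_count /= big_allpairs_dep big_enum /=.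
rewrite (partition_big (fun e => step t d e) xpredT) //=.
rewrite (reindex (@enum_val T predT)) /=; last by apply: onW_bij; apply: enum_val_bij.
apply: eq_bigr => j _; rewrite enum_rankK -sum_nat_const.
by apply: eq_big => [e|e]; rewrite /= inE // => /eqP ->.
Qed.

Lemma count_repr w :
  (count_row *m mx_morph count_mx w *m count_col) ord0 ord0 =
  (\sum_(t : T) init t * run_count w t)%N%:Z.
Proof.
rewrite -mulmxA mxE Posz_sum.
rewrite (reindex (@enum_val T predT)) /=; last by apply: onW_bij; apply: enum_val_bij.
apply: eq_bigr => j _; rewrite mxE.
by have := count_mx_col w (enum_val j); rewrite enum_valK => ->; rewrite PoszM.
Qed.

End RunCounting.

Lemma regular_seq_run_count (N : ANS) (f : nat -> nat) (E T : finType)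
    (step : T -> digit N -> E -> T) (out init : T -> nat) :
    (forall w, canonical N w -> f (val w) = \sum_(t : T) init t * run_count step out w t) ->
  regular_seq N f.
Proof.
move=> Hf; exists #|T|, (count_row init), (count_mx step), (count_col out) => w Hw.
by rewrite count_repr Hf.
Qed.

(* If canonical words have bounded length, an automaton can store the whole
   input word. *)
Lemma regular_seq_bounded (N : ANS) (B : nat) (f : nat -> nat) :
  (forall c, canonical N c -> size c <= B) -> regular_seq N f.
Proof.
move=> HB; pose Ws := seq_sub (words_upto (digit N) B).
pose step (o : option Ws) d (_ : unit) : option Ws :=
  if o is Some t then insub (rcons (ssval t) d) else None.
pose out (o : option Ws) := if o is Some t then f (val (ssval t)) else 0.
pose init (o : option Ws) : nat := o == insub [::].
apply: (@regular_seq_run_count N f unit _ step out init) => w Hw.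
have Hnil : [::] \in words_upto (digit N) B by rewrite mem_words_upto.
rewrite (bigD1 (insub [::])) //= {1}/init eqxx mul1n big1 ?addn0 => [|o Ho]; last first.
  by rewrite /init (negbTE Ho).
rewrite /run_count.
have -> : words_of_size unit (size w) = [:: nseq (size w) tt].
  by elim: (size w) => //= n ->; rewrite enumT unlock.
rewrite big_seq1.
suff Hrun u : size (u ++ w) <= B ->
    run2 step (insub u) w (nseq (size w) tt) = insub (u ++ w).
  by rewrite Hrun /= ?HB // insubT ?mem_words_upto ?HB.
elim: w u {Hw} => [|d w IH] u Hs; first by rewrite cats0.
have Hu : u \in words_upto (digit N) B.
  by rewrite mem_words_upto (leq_trans _ Hs) // size_cat leq_addr.
by rewrite /= insubT /= -cat_rcons IH // cat_rcons.
Qed.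

Definition vals (N : ANS) (J : finType) (W : seq {ffun J -> digit N}) : J -> nat :=
  fun j => val (track W j).

Definition recognizable (N : ANS) (J : finType) (P : (J -> nat) -> Prop) :=
  exists M : DFAO {ffun J -> digit N} bool,
    forall W, dfao_run M W <-> (forall j, ans_L N (track W j)) /\ P (vals W).

Definition ext (J I : Type) (v : J -> nat) (t : I -> nat) : J + I -> nat :=
  fun x => match x with inl j => v j | inr i => t i end.

Section Recognizable.
Variable N : ANS.
Local Notation D := (digit N).
Local Notation L := (ans_L N).
Local Notation d0 := (digit0 N).
Local Notation rec := (@recognizable N).
Hypothesis L_cons0 : forall w, L (ord0 :: w) = L w.
Hypothesis val_surj : forall j, exists2 c, canonical N c & val c = j.
Variable ML : DFAO D bool.
Hypothesis ML_L : forall w, L w <-> dfao_run ML w.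
Variable MA : DFAO (D * D * D)%type bool.
Hypothesis MA_add : forall w, add_lang w <-> dfao_run MA w.

Definition dfa_valid (J : finType) : DFAO {ffun J -> D} bool :=
  dfa_post (fun f : {ffun J -> bool} => [forall j, f j]) (dfa_tracks J ML).

Lemma dfao_run_valid (J : finType) (W : seq {ffun J -> D}) :
  dfao_run (dfa_valid J) W <-> forall j, L (track W j).
Proof.
rewrite dfao_run_post dfao_run_tracks; split.
  by move=> /forallP H j; apply/ML_L; have := H j; rewrite ffunE.
by move=> H; apply/forallP => j; rewrite ffunE; apply/ML_L.
Qed.

Lemma recognizable_ext (J : finType) (P Q : (J -> nat) -> Prop) :
  (forall v, P v <-> Q v) -> rec P -> rec Q.
Proof. by move=> HPQ [M HM]; exists M => W; rewrite HM HPQ. Qed.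

Lemma recognizable_true (J : finType) : rec (fun _ : J -> nat => True).
Proof. by exists (dfa_valid J) => W; rewrite dfao_run_valid; tauto. Qed.

Lemma recognizable_and (J : finType) (P Q : (J -> nat) -> Prop) :
  rec P -> rec Q -> rec (fun v => P v /\ Q v).
Proof.
move=> [M1 H1] [M2 H2]; exists (dfa_and M1 M2) => W; rewrite dfao_run_and.
split=> [/andP[/H1 [? ?] /H2 [? ?]] //|[HL [HP HQ]]].
by apply/andP; split; [apply/H1|apply/H2].
Qed.

Lemma recognizable_or (J : finType) (P Q : (J -> nat) -> Prop) :
  rec P -> rec Q -> rec (fun v => P v \/ Q v).
Proof.
move=> [M1 H1] [M2 H2]; exists (dfa_or M1 M2) => W; rewrite dfao_run_or.
split=> [/orP[/H1 [? ?]|/H2 [? ?]]|[HL [HP|HQ]]]; try by split; tauto.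
- by apply/orP; left; apply/H1.
- by apply/orP; right; apply/H2.
Qed.

Lemma recognizable_not (J : finType) (P : (J -> nat) -> Prop) :
  rec P -> rec (fun v => ~ P v).
Proof.
move=> [M HM]; exists (dfa_and (dfa_valid J) (dfa_post negb M)) => W.
rewrite dfao_run_and dfao_run_post; split.
  by move=> /andP[/dfao_run_valid HL /negP HN]; split=> // HP; apply/HN/HM.
move=> [HL HN]; apply/andP; split; first exact/dfao_run_valid.
by apply/negP => /HM [].
Qed.

Definition fromtracks (J : finType) (l : nat) (tr : J -> seq D) : seq {ffun J -> D} :=
  mkseq (fun p => [ffun x => nth d0 (tr x) p]) l.

Lemma track_fromtracks (J : finType) l (tr : J -> seq D) x :
  size (tr x) = l -> track (fromtracks l tr) x = tr x.
Proof.
move=> Hs; apply: (@eq_from_nth _ d0); first by rewrite size_track size_mkseq.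
move=> p; rewrite size_track size_mkseq => Hp.
by rewrite /track (nth_map [ffun => d0]) ?size_mkseq // nth_mkseq // ffunE.
Qed.

Definition proj_inl (J I : finType) (a : {ffun J + I -> D}) : {ffun J -> D} :=
  [ffun j => a (inl j)].

Lemma track_proj_inl (J I : finType) (V : seq {ffun J + I -> D}) j :
  track (map (@proj_inl J I) V) j = track V (inl j).
Proof. by rewrite /track -map_comp; apply: eq_map => a /=; rewrite ffunE. Qed.

(* Witnesses t i for the quantified variables are written with canonical
   representations, and all tracks are padded with zeros to a common length. *)
Lemma padded_extension (J I : finType) (W : seq {ffun J -> D}) (t : I -> nat) :
    (forall j, L (track W j)) ->
  exists V z, [/\ map (@proj_inl J I) V = nseq z [ffun => d0] ++ W,
                  forall x, L (track V x) & vals V = ext (vals W) t].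
Proof.
move=> HL; have rep i : exists c, canonical N c /\ val c = t i.
  by have [c ? ?] := val_surj (t i); exists c.
have [c Hc] := choice rep.
set m := \max_(i : I) size (c i); set l := m + size W.
pose tr x := match x with
  | inl j => nseq m d0 ++ track W j
  | inr i => nseq (l - size (c i)) d0 ++ c i end.
have Hs x : size (tr x) = l.
  case: x => [j|i]; rewrite /= size_cat size_nseq ?size_track ?subnK //.
  by apply: leq_trans (leq_addr _ _) ; apply: (@leq_bigmax _ (fun i => size (c i)) i).
exists (fromtracks l tr), m; split.
- apply: tracks_inj; first by rewrite size_map size_mkseq size_cat size_nseq.
  move=> j; rewrite track_proj_inl track_fromtracks ?Hs //.
  by rewrite /track map_cat map_nseq ffunE.
- move=> x; rewrite track_fromtracks ?Hs //; case: x => [j|i] /=; rewrite L_nseq0 //.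
  by have [/andP[]] := Hc i.
- apply: funext => x; rewrite /vals track_fromtracks ?Hs //.
  by case: x => [j|i] /=; rewrite val_nseq0 //; case: (Hc i).
Qed.

Lemma recognizable_exists (J I : finType) (P : (J + I -> nat) -> Prop) :
  rec P -> rec (fun v : J -> nat => exists t : I -> nat, P (ext v t)).
Proof.
move=> [M HM]; exists (dfa_proj (@proj_inl J I) [ffun => d0] M) => W.
rewrite dfao_run_proj; split.
  move=> [V [z [HV /HM [HL HP]]]].
  have Ht j : track V (inl j) = nseq z d0 ++ track W j.
    by rewrite -track_proj_inl HV /track map_cat map_nseq ffunE.
  split=> [j|]; first by have := HL (inl j); rewrite Ht L_nseq0.
  exists (fun i => vals V (inr i)); congr P: HP.
  by apply: funext => -[j|i] //=; rewrite /vals Ht val_nseq0.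
move=> [HL [t HP]]; have [V [z [HV HLV Hv]]] := padded_extension t HL.
by exists V, z; split=> //; apply/HM; rewrite Hv.
Qed.

Lemma recognizable_add (J : finType) (a b c : J) :
  rec (fun v : J -> nat => v a + v b = v c).
Proof.
pose g (f : {ffun J -> D}) := (f a, f b, f c).
exists (dfa_and (dfa_valid J) (dfa_pre g MA)) => W.
rewrite dfao_run_and dfao_run_pre.
have E : add_lang (map g W) <-> [/\ L (track W a), L (track W b), L (track W c)
                                  & vals W a + vals W b = vals W c].
  by rewrite /add_lang -!map_comp.
split=> [/andP[/dfao_run_valid HL /MA_add/E [_ _ _ Hv]] //|[HL Hv]].
by apply/andP; split; [apply/dfao_run_valid|apply/MA_add/E].
Qed.

Lemma recognizable_automatic (O : Type) (y : nat -> O) (My : DFAO D O)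
    (Hy : forall w, L w -> dfao_run My w = y (val w))
    (J : finType) (a : J) (p : O -> bool) :
  rec (fun v : J -> nat => p (y (v a))).
Proof.
exists (dfa_and (dfa_valid J) (dfa_pre (fun f : {ffun J -> D} => f a) (dfa_post p My))).
move=> W; rewrite dfao_run_and dfao_run_pre dfao_run_post -/(track W a).
split=> [/andP[/dfao_run_valid HL]|[HL Hv]]; first by rewrite Hy.
by apply/andP; split; [apply/dfao_run_valid|rewrite Hy].
Qed.

Lemma recognizable_synchronized (I : finType) (s : nat -> {ffun I -> nat})
    (MS : DFAO (D * {ffun I -> D})%type bool) (HS : forall w, sync_lang s w <-> dfao_run MS w)
    (J : finType) (a : J) (g : I -> J) :
  rec (fun v : J -> nat => forall i, s (v a) i = v (g i)).
Proof.
pose h (f : {ffun J -> D}) := (f a, [ffun i => f (g i)]).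
exists (dfa_and (dfa_valid J) (dfa_pre h MS)) => W.
rewrite dfao_run_and dfao_run_pre.
have Et i : map (fun p : D * {ffun I -> D} => p.2 i) (map h W) = track W (g i).
  by rewrite -map_comp; apply: eq_map => f /=; rewrite ffunE.
have E : sync_lang s (map h W) <-> [/\ L (track W a), forall i, L (track W (g i))
                                    & forall i, s (vals W a) i = vals W (g i)].
  rewrite /sync_lang -map_comp /vals.
  by split=> -[? H2 H3]; split=> // i; move: (H2 i) (H3 i); rewrite Et.
split=> [/andP[/dfao_run_valid HL /HS/E [_ _ Hv]] //|[HL Hv]].
by apply/andP; split; [apply/dfao_run_valid|apply/HS/E].
Qed.

Lemma recognizable_zero (J : finType) (a : J) : rec (fun v : J -> nat => v a = 0).
Proof. by apply: recognizable_ext (recognizable_add a a a) => v; lia. Qed.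

Lemma recognizable_eq (J : finType) (a b : J) : rec (fun v : J -> nat => v a = v b).
Proof.
have := recognizable_exists (recognizable_and (recognizable_zero (inr tt : J + unit))
                              (recognizable_add (inl b) (inr tt) (inl a))).
apply: recognizable_ext => v /=; split=> [[t [-> H]]|H]; first by lia.
by exists (fun _ => 0); split=> //; lia.
Qed.

(* 1 is the nonzero integer that is not a sum of two nonzero integers. *)
Lemma recognizable_one (J : finType) (a : J) : rec (fun v : J -> nat => v a = 1).
Proof.
pose x : J + bool := inr true; pose y : J + bool := inr false.
have := recognizable_and (recognizable_not (recognizable_zero a))
  (recognizable_not (recognizable_exists (recognizable_and (recognizable_add x y (inl a))
     (recognizable_and (recognizable_not (recognizable_zero x))
                       (recognizable_not (recognizable_zero y)))))).
apply: recognizable_ext => v /=; split=> [[H0 H]|->]; last by split=> // -[t /=]; lia.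
case E: (v a) H0 => [|[|n]] // _; case: H.
by exists (fun b => if b then 1 else n.+1) => /=; rewrite E; split=> //; lia.
Qed.

Lemma recognizable_succ (J : finType) (a b : J) :
  rec (fun v : J -> nat => v b = v a + 1).
Proof.
have := recognizable_exists (recognizable_and (recognizable_one (inr tt : J + unit))
                              (recognizable_add (inl a) (inr tt) (inl b))).
apply: recognizable_ext => v /=; split=> [[t [-> <-]] //|->].
by exists (fun _ => 1).
Qed.

Lemma recognizable_addn c (J : finType) (a b : J) :
  rec (fun v : J -> nat => v a = v b + c).
Proof.
elim: c J a b => [|c IH] J a b.
  by apply: recognizable_ext (recognizable_eq a b) => v; rewrite addn0.
have := recognizable_exists (recognizable_and (IH _ (inr tt : J + unit) (inl b))
                              (recognizable_succ (inr tt : J + unit) (inl a))).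
apply: recognizable_ext => v /=; split=> [[t [-> ->]]|->]; first by lia.
by exists (fun _ => v b + c); split=> //; lia.
Qed.

Lemma recognizable_eqn (J : finType) (a : J) c : rec (fun v : J -> nat => v a = c).
Proof.
have := recognizable_exists (recognizable_and (recognizable_zero (inr tt : J + unit))
                              (recognizable_addn c (inl a) (inr tt))).
apply: recognizable_ext => v /=; split=> [[t [H0 ->]]|->]; first by rewrite H0.
by exists (fun _ => 0).
Qed.

Lemma recognizable_geqn (J : finType) (a : J) c : rec (fun v : J -> nat => c <= v a).
Proof.
have := recognizable_exists (recognizable_addn c (inl a : J + unit) (inr tt)).
apply: recognizable_ext => v /=; split=> [[t ->]|Hc]; first by rewrite leq_addl.
by exists (fun _ => v a - c); rewrite subnK.
Qed.

Lemma recognizable_forall (J X : finType) (P : X -> (J -> nat) -> Prop) :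
  (forall x, rec (P x)) -> rec (fun v => forall x, P x v).
Proof.
move=> HP; suff : rec (fun v => forall x, x \in enum X -> P x v).
  by apply: recognizable_ext => v; split=> H x => [|_]; apply: H; rewrite ?mem_enum.
elim: (enum X) => [|x s IH].
  by apply: recognizable_ext (recognizable_true J) => v.
apply: recognizable_ext (recognizable_and (HP x) IH) => v; split.
  by move=> [H1 H2] y; rewrite inE => /orP[/eqP->|/H2].
by move=> H; split=> [|y Hy]; apply: H; rewrite inE ?eqxx ?Hy ?orbT.
Qed.

Lemma recognizable_existsF (J X : finType) (P : X -> (J -> nat) -> Prop) :
  (forall x, rec (P x)) -> rec (fun v => exists x, P x v).
Proof.
move=> HP; apply: recognizable_ext (recognizable_not (recognizable_forall
                     (fun x => recognizable_not (HP x)))) => v.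
split=> [H|[x Hx] H]; last exact: H x Hx.
by apply: contrapT => Hn; apply: H => x Hx; apply: Hn; exists x.
Qed.

Section Classes.
Variables (A : finType) (k : nat) (x : nat -> A).
Hypothesis k_gt0 : 0 < k.
Local Notation S := (factor_alph x k).
Local Notation y := (Bk k x).
Local Notation P := (parikh_prefix (Bk k x)).
Variable My : DFAO D S.
Hypothesis My_y : forall w, L w -> dfao_run My w = y (val w).
Variable MS : DFAO (D * {ffun S -> D})%type bool.
Hypothesis MS_sync : forall w, sync_lang P w <-> dfao_run MS w.

Definition prefix_type : finType := (k.-1).-tuple (option A).

(* v None is the length n, and v (Some c) the number of occurrences of c. *)
Definition class_rel (a : prefix_type) (v : option S -> nat) :=
  exists i, factor_prefix k x (v None) i = a /\
            forall c, v (Some c) = window_parikh k x (v None) i c.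

Definition class_vars : finType := (option S + ('I_3 + (S + S)))%type.
Definition var_n : class_vars := inl None.
Definition var_count c : class_vars := inl (Some c).
Definition var_i : class_vars := inr (inl (@Ordinal 3 0 isT)).
Definition var_m : class_vars := inr (inl (@Ordinal 3 1 isT)).
Definition var_j : class_vars := inr (inl (@Ordinal 3 2 isT)).
Definition var_Pi c : class_vars := inr (inr (inl c)).
Definition var_Pj c : class_vars := inr (inr (inr c)).

Definition letter_prefix (a : prefix_type) t (b : S) : bool := prefix_code k t (sval b) == a.

(* With m = n - (k - 1) and j = i + m, the counts are P(j) - P(i), and the
   prefix is read off the single letter y(i). *)
Definition class_formula (a : prefix_type) (v : class_vars -> nat) :=
  [/\ v var_n = v var_m + k.-1 \/ (~ k.-1 <= v var_n /\ v var_m = 0),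
      v var_i + v var_m = v var_j,
      (k.-1 <= v var_n /\ letter_prefix a k.-1 (y (v var_i))) \/
        (exists t : 'I_k.-1, v var_n = t /\ letter_prefix a t (y (v var_i))),
      (forall c, P (v var_i) c = v (var_Pi c)) /\
        (forall c, P (v var_j) c = v (var_Pj c)) &
      forall c, v (var_Pi c) + v (var_count c) = v (var_Pj c)].

Lemma recognizable_class_formula a : rec (class_formula a).
Proof.
have prefix t := recognizable_automatic My_y var_i (letter_prefix a t).
have Rm := recognizable_or (recognizable_addn k.-1 var_n var_m)
  (recognizable_and (recognizable_not (recognizable_geqn var_n k.-1)) (recognizable_zero var_m)).
have Rprefix := recognizable_or (recognizable_and (recognizable_geqn var_n k.-1) (prefix k.-1))
  (recognizable_existsF (fun t : 'I_k.-1 => recognizable_and (recognizable_eqn var_n t) (prefix t))).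
have RP := recognizable_and (recognizable_synchronized MS_sync var_i var_Pi)
                            (recognizable_synchronized MS_sync var_j var_Pj).
have Rcount := recognizable_forall (fun c => recognizable_add (var_Pi c) (var_count c) (var_Pj c)).
have := recognizable_and Rm (recognizable_and (recognizable_add var_i var_m var_j)
          (recognizable_and Rprefix (recognizable_and RP Rcount))).
by apply: recognizable_ext => v; split=> [[? [? [? [? ?]]]]|[? ? ? ? ?]].
Qed.

Lemma class_formula_class_rel a v (t : 'I_3 + (S + S) -> nat) :
  class_formula a (ext v t) -> class_rel a v.
Proof.
move=> [/= Em Ej Eprefix [EPi EPj] Ecount].
have Hm : t (inl (@Ordinal 3 1 isT)) = v None - k.-1.
  case: Em => [->|[Hn ->]]; first by rewrite addnK.
  by apply/esym/eqP; rewrite subn_eq0 ltnW // ltnNge; apply/negP.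
exists (t (inl (@Ordinal 3 0 isT))); split.
  rewrite (factor_prefix_letter x k_gt0); apply/eqP.
  case: Eprefix => [[Hge HpL]|[t' [Hn HpL]]]; first by rewrite (minn_idPl Hge).
  by rewrite Hn (minn_idPr (ltnW (ltn_ord t'))).
by move=> c; rewrite ffunE -Hm Ej EPi EPj -Ecount /= addKn.
Qed.

Lemma class_rel_class_formula a v : class_rel a v ->
  exists t : 'I_3 + (S + S) -> nat, class_formula a (ext v t).
Proof.
move=> [i [Hpre Hv]]; set n := v None; set m := n - k.-1.
exists (fun z : 'I_3 + (S + S) => match z with
  | inl o => if (o : nat) == 0 then i else if (o : nat) == 1 then m else i + m
  | inr (inl c) => P i c
  | inr (inr c) => P (i + m) c end).
move: Hpre; rewrite (factor_prefix_letter x k_gt0) => Hpre.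
split => /=.
- case: (leqP k.-1 n) => H; first by left; rewrite subnK.
  by right; split=> //; apply/eqP; rewrite subn_eq0 ltnW.
- by [].
- case: (leqP k.-1 n) => H.
    by left; split=> //; rewrite /letter_prefix /= -Hpre (minn_idPl H).
  right; exists (Ordinal H); split=> //.
  by rewrite /letter_prefix /= -Hpre (minn_idPr (ltnW H)).
- by [].
- by move=> c; rewrite Hv [window_parikh _ _ _ _ _]ffunE subnKC // parikh_prefix_leq.
Qed.

Lemma recognizable_class_rel a : rec (class_rel a).
Proof.
apply: recognizable_ext (recognizable_exists (recognizable_class_formula a)) => v.
split=> [[t /class_formula_class_rel]|/class_rel_class_formula] //.
Qed.

Section Counting.
Variable M : prefix_type -> DFAO {ffun option S -> D} bool.
Hypothesis M_class : forall a W,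
  dfao_run (M a) W <-> (forall o, L (track W o)) /\ class_rel a (vals W).
Variable w : seq D.
Hypothesis Lw : L w.
Local Notation n := (val w).
Local Notation l := (size w).

Definition join_letter (d : D) (e : {ffun S -> D}) : {ffun option S -> D} :=
  [ffun o => if o is Some c then e c else d].

Definition join_word (U : seq {ffun S -> D}) :=
  map (fun p => join_letter p.1 p.2) (zip w U).

Lemma track_join_word U o : size U = l ->
  track (join_word U) o = if o is Some c then track U c else w.
Proof.
rewrite /join_word; elim: w U => [|d w' IH] [|e U] //= => [_|[HU]]; first by case: o.
by rewrite IH // ffunE; case: (o).
Qed.

Definition codes := [seq (a, U) | a <- enum prefix_type, U <- words_of_size {ffun S -> D} l].

Definition accepted (p : prefix_type * seq {ffun S -> D}) := dfao_run (M p.1) (join_word p.2).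

Lemma size_code p : p \in codes -> size p.2 = l.
Proof. by case/allpairsP => -[a U] [_ /=]; rewrite mem_words_of_size => /eqP HU ->. Qed.

Lemma acceptedP a U : size U = l -> accepted (a, U) <->
  (forall c, L (track U c)) /\ exists i, factor_prefix k x n i = a /\
                               forall c, val (track U c) = window_parikh k x n i c.
Proof.
move=> HU; have Hv : vals (join_word U) = fun o => if o is Some c then val (track U c) else n.
  by apply: funext => o; rewrite /vals track_join_word //; case: o.
rewrite /accepted M_class Hv; split=> [[HL HR]|[HL HR]]; split=> //.
  by move=> c; have := HL (Some c); rewrite track_join_word.
by move=> o; rewrite track_join_word //; case: o.
Qed.

Definition code_class (p : prefix_type * seq {ffun S -> D}) : {set n.-tuple A} :=
  [set v in factors x n | `[< exists i, [/\ factor_prefix k x n i = p.1,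
      forall c, val (track p.2 c) = window_parikh k x n i c &
      kab_eq k (fact_at x n i) v] >]].

Definition classes := [set [set v in factors x n | kab_eq k u v] | u : n.-tuple A in factors x n].

Lemma code_classE a U i : factor_prefix k x n i = a ->
    (forall c, val (track U c) = window_parikh k x n i c) ->
  code_class (a, U) = [set v in factors x n | kab_eq k (fact_at x n i) v].
Proof.
move=> Hp Hv; apply/setP => v; rewrite !inE; congr andb; apply/asboolP/idP => [|Hk].
  move=> [i' [Hp' Hv' Hk]]; apply: kab_eq_trans Hk.
  rewrite kab_eq_fact_at // Hp Hp' eqxx /=; apply/eqP/ffunP => c; by rewrite -Hv -Hv'.
by exists i.
Qed.

Lemma window_code i : exists2 U, size U = l &
  (forall c, L (track U c)) /\ forall c, val (track U c) = window_parikh k x n i c.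
Proof.
have Hb c : exists t, [/\ L t, size t = l & val t = window_parikh k x n i c].
  exact/leq_val_same_size/window_parikh_le.
have [tc Htc] := choice Hb.
have HtU c : track (fromtracks l tc) c = tc c by rewrite track_fromtracks //; case: (Htc c).
exists (fromtracks l tc); first exact: size_mkseq.
by split=> c; rewrite HtU; case: (Htc c).
Qed.

Lemma classes_codes : classes =i map code_class (filter accepted codes).
Proof.
move=> X; apply/imsetP/mapP => [[u]|[[a U]]].
  rewrite inE => /asboolP [i ->] ->; have [U HU [HL HV]] := window_code i.
  exists (factor_prefix k x n i, U); last by rewrite (code_classE (i := i)).
  rewrite mem_filter (allpairs_f (fun a U => (a, U))) ?mem_enum ?mem_words_of_size ?HU //.
  by rewrite andbT; apply/acceptedP => //; split=> //; exists i.
rewrite mem_filter => /andP[Hacc /size_code HU] ->.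
have [_ [i [Hp Hv]]] := (acceptedP a HU).1 Hacc.
by exists (fact_at x n i); rewrite ?inE ?fact_at_is_factor // (code_classE Hp Hv).
Qed.

Lemma code_class_inj : {in filter accepted codes &, injective code_class}.
Proof.
move=> [a1 U1] [a2 U2]; rewrite !mem_filter.
move=> /andP[H1 /size_code HU1] /andP[H2 /size_code HU2] HF.
have [L1 [i1 [Hp1 Hv1]]] := (acceptedP a1 HU1).1 H1.
have [L2 [i2 [Hp2 Hv2]]] := (acceptedP a2 HU2).1 H2.
move: HF; rewrite (code_classE Hp1 Hv1) (code_classE Hp2 Hv2) => HF.
have : fact_at x n i2 \in [set v in factors x n | kab_eq k (fact_at x n i2) v].
  by rewrite !inE kab_eq_refl fact_at_is_factor.
rewrite -HF inE kab_eq_fact_at // => /andP[_ /andP[/eqP Hp /eqP Hd]].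
congr pair; first by rewrite -Hp1 -Hp2 Hp.
apply: tracks_inj => [|c]; first by rewrite HU1 HU2.
apply: val_inj_size; rewrite ?size_track ?HU1 ?HU2 //.
by rewrite Hv1 Hv2 Hd.
Qed.

Lemma rho_count_accepted : rho k x n = count accepted codes.
Proof.
rewrite /rho -/classes (eq_card classes_codes).
have /card_uniqP -> : uniq (map code_class (filter accepted codes)).
  rewrite map_inj_in_uniq ?filter_uniq //; last exact: code_class_inj.
  apply: allpairs_uniq => [||[? ?] [? ?] _ _ [-> ->]] //.
  - exact: enum_uniq.
  - exact: uniq_words_of_size.
by rewrite size_map size_filter.
Qed.

End Counting.

(* One copy of the automaton of class_rel a for each prefix a: the weighted
   number of its runs from the initial states counts the accepted codes. *)
Lemma regular_rho : regular_seq N (rho k x).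
Proof.
have [M HM] := choice recognizable_class_rel.
pose T := {a : prefix_type & dstate (M a)}.
pose tg a (s : dstate (M a)) : T := Tagged (fun a => dstate (M a)) s.
pose step (t : T) d e : T := tg _ (dtrans (tagged t) (join_letter d e)).
pose out (t : T) : nat := dout (tagged t).
pose init (t : T) : nat := tagged t == dstart (M (tag t)).
apply: (@regular_seq_run_count _ _ _ _ step out init) => w /andP[Lw _].
have run2E a (s : dstate (M a)) U :
    run2 step (tg a s) w U = tg a (foldl (@dtrans _ _ (M a)) s (join_word w U)).
  by rewrite /join_word; elim: w s U {Lw} => [|d w' IH] s [|e U] //=; rewrite IH.
have -> : \sum_(t : T) init t * run_count step out w t =
          \sum_a \sum_(s : dstate (M a)) init (tg a s) * run_count step out w (tg a s).
  by rewrite sig_big_dep; apply: eq_big => -[a s].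
rewrite (rho_count_accepted HM Lw) -sum1_count big_mkcond big_allpairs big_enum /=.
apply: eq_bigr => a _; rewrite (bigD1 (dstart (M a))) //= [X in _ + X]big1; last first.
  by move=> s /negbTE Hs; rewrite /init /= Hs.
rewrite /init /= eqxx mul1n addn0; apply: eq_bigr => U _.
by rewrite run2E /out /accepted /dfao_run /=; case: (dout _).
Qed.

End Classes.

End Recognizable.

Theorem theorem40 (A : finType) (k : nat) (x : nat -> A) (Nk : ANS) :
  (1 <= k)%N ->
  regular_ANS Nk ->
  automatic Nk (Bk k x) ->
  synchronized Nk (parikh_prefix (Bk k x)) ->
  regular_seq Nk (rho k x).
Proof.
move=> k_gt0 [[Lnil L_cons0 _] [[ML ML_L] [MA MA_add]]] [My My_y] [MS MS_sync].
(* ans_wf makes L infinite, but zero-padding alone does that: the canonical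
   words may still have bounded length. *)
have [[B HB]|unbounded] := EM (exists B, forall c, canonical Nk c -> size c <= B).
  exact: regular_seq_bounded HB.
have long_canonical B : exists2 c, canonical Nk c & B < size c.
  apply: contrapT => H; apply: unbounded; exists B => c Hc.
  by rewrite leqNgt; apply/negP => HB; apply: H; exists c.
have val_surj := val_canonical_surj Lnil long_canonical.
exact: (regular_rho L_cons0 val_surj ML_L MA_add k_gt0 My_y MS_sync).
Qed.
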